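(* Let $n\ge0$, $r,s\ge1$, and suppose the variety $\mathcal V$ has $n+2$ Gumm terms and satisfies $$\alpha(\beta\circ_{2r+1}\gamma)\subseteq\alpha(\gamma\circ\beta)\circ(\alpha\gamma\circ_s\alpha\beta).$$ Then $\mathcal V$ satisfies $\alpha(\beta\circ_{4r+1}\gamma)\subseteq\alpha(\gamma\circ\beta)\circ(\alpha\gamma\circ_{s+4rn}\alpha\beta)$, and more generally, for every $q\ge1$, $$\alpha(\beta\circ_{2^qr+1}\gamma)\subseteq\alpha(\gamma\circ\beta)\circ(\alpha\gamma\circ_{s+(2^{q+1}-4)rn}\alpha\beta).$$
   Context: Here $\alpha,\beta,\gamma$ range over congruences of algebras in $\mathcal V$. $\circ$ is relational composition, juxtaposition is intersection. For relations $X,Y$ and $m\ge1$, $X\circ_m Y$ denotes $X\circ Y\circ X\circ\cdots$ with $m$ factors. A variety has $n+2$ Gumm terms if it has ternary terms $p,j_1,\dots,j_{n+1}$ satisfying: $x=j_i(x,y,x)$ for all $i$; $x=p(x,z,z)$; $p(x,x,z)=j_1(x,x,z)$; $j_i(x,z,z)=j_{i+1}(x,z,z)$ for odd $i\le n$; $j_i(x,x,z)=j_{i+1}(x,x,z)$ for even $i\le n$; $j_{n+1}(x,y,z)=z$. *)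

From mathcomp Require Import all_boot.
Set Implicit Arguments.
Unset Strict Implicit.
Unset Printing Implicit Defensive.

Record signature := Signature {
  op_sym :> Type;
  arity : op_sym -> nat
}.

Inductive term (S : signature) (X : Type) : Type :=
| Var : X -> term S X
| App : forall f : S, ('I_(arity f) -> term S X) -> term S X.
Arguments Var {S X} _.
Arguments App {S X} _ _.

Record algebra (S : signature) := Algebra {
  carrier :> Type;
  interp : forall f : S, ('I_(arity f) -> carrier) -> carrier
}.

Fixpoint eval (S : signature) (A : algebra S) (X : Type) (v : X -> A)
  (t : term S X) : A :=
  match t with
  | Var x => v x
  | App f args => @interp S A f (fun i => eval v (args i))
  end.

Definition identities (S : signature) := term S nat -> term S nat -> Prop.

Definition in_variety (S : signature) (Sigma : identities S) (A : algebra S) : Prop :=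
  forall t1 t2, Sigma t1 t2 -> forall v : nat -> A, eval v t1 = eval v t2.

Inductive var3 := vx | vy | vz.

Definition ev3 (S : signature) (A : algebra S) (t : term S var3) (x y z : A) : A :=
  @eval S A var3 (fun w => match w with vx => x | vy => y | vz => z end) t.

(* V has n+2 Gumm terms p, j_1, ..., j_{n+1}  (j is indexed by 1..n+1). *)
Definition has_Gumm_terms (S : signature) (Sigma : identities S) (n : nat) : Prop :=
  exists (p : term S var3) (j : nat -> term S var3),
    forall A : algebra S, in_variety Sigma A ->
    forall x y z : A,
      (forall i, 1 <= i <= n.+1 -> ev3 (j i) x y x = x) /\
      ev3 p x z z = x /\
      ev3 p x x z = ev3 (j 1) x x z /\
      (forall i, 1 <= i <= n -> odd i -> ev3 (j i) x z z = ev3 (j i.+1) x z z) /\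
      (forall i, 1 <= i <= n -> ~~ odd i -> ev3 (j i) x x z = ev3 (j i.+1) x x z) /\
      ev3 (j n.+1) x y z = z.

Definition rel_comp (A : Type) (X Y : A -> A -> Prop) : A -> A -> Prop :=
  fun a c => exists b, X a b /\ Y b c.

Definition rel_meet (A : Type) (X Y : A -> A -> Prop) : A -> A -> Prop :=
  fun a b => X a b /\ Y a b.

(* X o_m Y = X o Y o X o ... with m factors (m >= 1); for m = 0 we set it to
   equality (never used). *)
Fixpoint rel_comp_m (A : Type) (m : nat) (X Y : A -> A -> Prop) : A -> A -> Prop :=
  match m with
  | 0 => fun a b => a = b
  | 1 => X
  | m'.+1 => rel_comp X (rel_comp_m m' Y X)
  end.

Definition is_congruence (S : signature) (A : algebra S) (th : A -> A -> Prop) : Prop :=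
  (forall a, th a a) /\
  (forall a b, th a b -> th b a) /\
  (forall a b c, th a b -> th b c -> th a c) /\
  (forall (f : S) (u w : 'I_(arity f) -> A),
      (forall i, th (u i) (w i)) -> th (@interp S A f u) (@interp S A f w)).

Definition satisfies_incl (S : signature) (Sigma : identities S) (m k : nat) : Prop :=
  forall A : algebra S, in_variety Sigma A ->
  forall alpha beta gamma : A -> A -> Prop,
    is_congruence alpha -> is_congruence beta -> is_congruence gamma ->
    forall a b : A,
      rel_meet alpha (rel_comp_m m beta gamma) a b ->
      rel_comp (rel_meet alpha (rel_comp gamma beta))
               (rel_comp_m k (rel_meet alpha gamma) (rel_meet alpha beta)) a b.

(* Let [a alpha b] be joined by a beta/gamma-path [a = e_0, e_1, ..., e_{4t+1} = b].
   Folding the path at its middle with the Gumm term [p] (using [p(x,z,z) = x]),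
   the elements [p(a, e_{2t+1-i}, e_{2t+i})] form a beta/gamma-path of length
   [2t+1] from [a] to [p(a,a,b) = j_1(a,a,b)], which is beta-related to
   [w = j_1(a,e_1,b)]; as [w alpha a], the hypothesis applies to [(a, w)].
   It remains to go from [w] to [b] inside the alpha-class of [a]: run the path
   [e_1, ..., e_{4t}] through [j_i(a, -, b)], forwards for odd [i] and backwards
   for even [i]; the remaining Gumm identities glue consecutive blocks with one
   beta-step each, so every [j_1, ..., j_n] costs [4t] steps and [j_{n+1}(a,-,b) = b].
   Iterating this doubling gives the statement for every [q]. *)

From mathcomp Require Import all_boot zify.
Set Implicit Arguments.
Unset Strict Implicit.
Unset Printing Implicit Defensive.

Section RelCompM.
Variable A : Type.
Implicit Types (X Y : A -> A -> Prop) (a b c : A).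

Lemma rel_comp_mS m X Y a b :
  rel_comp_m m.+1 X Y a b <-> rel_comp X (rel_comp_m m Y X) a b.
Proof.
case: m => [|m] //=; split=> [Xab|[c [Xac <-]]] //; by exists b.
Qed.

Lemma rel_comp_m_cat m m' X Y a c b :
  rel_comp_m m X Y a c ->
  rel_comp_m m' (if odd m then Y else X) (if odd m then X else Y) c b ->
  rel_comp_m (m + m') X Y a b.
Proof.
elim: m X Y a => [|m IH] X Y a; first by move=> /= ->.
move=> /rel_comp_mS [d [Xad Hdc]] Hcb; rewrite addSn; apply/rel_comp_mS.
exists d; split=> //; apply: IH Hdc _.
by move: Hcb => /=; case: (odd m).
Qed.

Lemma rel_comp_m_split m m' X Y a b :
  rel_comp_m (m + m') X Y a b ->
  exists c, rel_comp_m m X Y a c /\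
    rel_comp_m m' (if odd m then Y else X) (if odd m then X else Y) c b.
Proof.
elim: m X Y a => [|m IH] X Y a; first by exists a.
rewrite addSn => /rel_comp_mS [d [Xad /IH [c [Hdc Hcb]]]].
exists c; split; first by apply/rel_comp_mS; exists d.
by move: Hcb => /=; case: (odd m).
Qed.

Lemma rel_comp_m_refl m X Y a :
  (forall x, X x x) -> (forall x, Y x x) -> rel_comp_m m X Y a a.
Proof.
elim: m X Y => [|m IH] X Y reflX reflY //.
by apply/rel_comp_mS; exists a; split; [exact: reflX | exact: IH].
Qed.

Lemma rel_comp_m_leq m m' X Y a b :
  (forall x, X x x) -> (forall x, Y x x) -> m <= m' ->
  rel_comp_m m X Y a b -> rel_comp_m m' X Y a b.
Proof.
move=> reflX reflY /subnKC <- Hab; apply: rel_comp_m_cat Hab _.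
by apply: rel_comp_m_refl; case: (odd m).
Qed.

Lemma rel_comp_m_rev m X Y a b :
  (forall x y, X x y -> X y x) -> (forall x y, Y x y -> Y y x) ->
  rel_comp_m m X Y a b ->
  rel_comp_m m (if odd m then X else Y) (if odd m then Y else X) b a.
Proof.
elim: m X Y a => [|m IH] X Y a symX symY; first by move=> /= ->.
move=> /rel_comp_mS [d [Xad /IH Hbd]]; rewrite oddS -addn1.
have {}Hbd := Hbd symY symX.
by case Hm: (odd m) Hbd => /= Hbd; apply: rel_comp_m_cat Hbd _; rewrite Hm; apply: symX.
Qed.

Lemma rel_comp_m_sym m X Y a b :
  odd m -> (forall x y, X x y -> X y x) -> (forall x y, Y x y -> Y y x) ->
  rel_comp_m m X Y a b -> rel_comp_m m X Y b a.
Proof. by move=> Hm symX symY /(rel_comp_m_rev symX symY); rewrite Hm. Qed.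

Lemma rel_comp_m_absorbl m X Y a c b :
  (forall x y z, X x y -> X y z -> X x z) ->
  X a c -> rel_comp_m m.+1 X Y c b -> rel_comp_m m.+1 X Y a b.
Proof.
move=> transX Xac /rel_comp_mS [d [Xcd Hdb]].
by apply/rel_comp_mS; exists d; split; first exact: transX Xac Xcd.
Qed.

Lemma rel_comp_m_absorbr m X Y a c b :
  (forall x y z, X x y -> X y z -> X x z) -> odd m ->
  rel_comp_m m X Y a c -> X c b -> rel_comp_m m X Y a b.
Proof.
case: m => [//|m] transX; rewrite oddS => /negbTE Hm.
rewrite -addn1 => /rel_comp_m_split [d [Had]]; rewrite Hm => Xdc Xcb.
by apply: rel_comp_m_cat Had _; rewrite Hm; apply: transX Xdc Xcb.
Qed.

Lemma rel_comp_m_cat_trans k l X Y a c b :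
  (forall x, X x x) -> (forall x, Y x x) ->
  (forall x y z, X x y -> X y z -> X x z) ->
  rel_comp_m k X Y a c -> rel_comp_m l X Y c b -> rel_comp_m (k + l) X Y a b.
Proof.
move=> reflX reflY transX Hac; case Hk: (odd k); last first.
  by move=> Hcb; apply: rel_comp_m_cat Hac _; rewrite Hk.
case: l => [/= <-|l /rel_comp_mS [d [Xcd Hdb]]]; first by rewrite addn0.
rewrite addnS; apply: (rel_comp_m_leq reflX reflY (leqnSn _)).
by apply: rel_comp_m_cat (rel_comp_m_absorbr transX Hk Hac Xcd) _; rewrite Hk.
Qed.

Lemma rel_comp_m_iter l n X Y (c : nat -> A) :
  ~~ odd l -> (forall i, i < n -> rel_comp_m l X Y (c i) (c i.+1)) ->
  rel_comp_m (l * n) X Y (c 0) (c n).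
Proof.
move=> /negbTE Hl; elim: n => [|n IH] Hc; first by rewrite muln0.
rewrite mulnSr; apply: rel_comp_m_cat (IH (fun i Hi => Hc i (ltnW Hi))) _.
by rewrite oddM Hl; apply: Hc.
Qed.

End RelCompM.

Lemma rel_comp_m_map2 (A B : Type) (g : A -> A -> B) m (X Y : A -> A -> Prop)
    (X' Y' : B -> B -> Prop) a a' b b' :
  (forall x x' y y', X x x' -> X y y' -> X' (g x y) (g x' y')) ->
  (forall x x' y y', Y x x' -> Y y y' -> Y' (g x y) (g x' y')) ->
  rel_comp_m m X Y a a' -> rel_comp_m m X Y b b' ->
  rel_comp_m m X' Y' (g a b) (g a' b').
Proof.
elim: m X Y X' Y' a b => [|m IH] X Y X' Y' a b gX gY; first by move=> /= -> ->.
move=> /rel_comp_mS [c [Xac Hca]] /rel_comp_mS [d [Xbd Hdb]].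
by apply/rel_comp_mS; exists (g c d); split; [exact: gX | exact: IH gY gX Hca Hdb].
Qed.

Lemma rel_comp_m_map (A B : Type) (g : A -> B) m (X Y : A -> A -> Prop)
    (X' Y' : B -> B -> Prop) a b :
  (forall x y, X x y -> X' (g x) (g y)) -> (forall x y, Y x y -> Y' (g x) (g y)) ->
  rel_comp_m m X Y a b -> rel_comp_m m X' Y' (g a) (g b).
Proof.
move=> gX gY Hab.
by apply: (rel_comp_m_map2 (g := fun x (_ : A) => g x) _ _ Hab Hab) => x x' y y' H _;
  [exact: gX | exact: gY].
Qed.

Section Congruences.
Variables (S : signature) (A : algebra S).
Implicit Types th : A -> A -> Prop.

Lemma cong_refl th : is_congruence th -> forall x, th x x.
Proof. by case. Qed.

Lemma cong_sym th : is_congruence th -> forall x y, th x y -> th y x.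
Proof. by case=> _ []. Qed.

Lemma cong_trans th : is_congruence th -> forall x y z, th x y -> th y z -> th x z.
Proof. by case=> _ [_ []]. Qed.

Lemma is_congruence_meet th th' :
  is_congruence th -> is_congruence th' -> is_congruence (rel_meet th th').
Proof.
move=> [r [s [t c]]] [r' [s' [t' c']]]; split; [|split; [|split]].
- by move=> x; split.
- by move=> x y [/s ? /s' ?]; split.
- by move=> x y z [H1 H2] [H3 H4]; split; [exact: t H1 H3 | exact: t' H2 H4].
- by move=> f u w H; split; [apply: c | apply: c'] => i; case: (H i).
Qed.

Lemma eval_cong th X (t : term S X) (v w : X -> A) :
  is_congruence th -> (forall x, th (v x) (w x)) -> th (eval v t) (eval w t).
Proof.
move=> [_ [_ [_ Hc]]] Hvw; elim: t => [x|f args IH] /=; [exact: Hvw | exact: Hc].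
Qed.

Lemma ev3_cong th (t : term S var3) x y z x' y' z' :
  is_congruence th -> th x x' -> th y y' -> th z z' ->
  th (ev3 t x y z) (ev3 t x' y' z').
Proof. by move=> Hth Hx Hy Hz; apply: eval_cong => // -[]. Qed.

Lemma ev3_idem_cong th (t : term S var3) a b :
  is_congruence th -> (forall u, ev3 t a u a = a) -> th a b ->
  forall y, th (ev3 t a y b) a.
Proof.
move=> Hth idem Hab y; rewrite -{2}(idem y).
exact: ev3_cong Hth (cong_refl Hth a) (cong_refl Hth y) (cong_sym Hth Hab).
Qed.

End Congruences.

Section Folding.
Variables (S : signature) (A : algebra S) (p : term S var3).
Hypothesis p_xzz : forall x z : A, ev3 p x z z = x.
Variables beta gamma : A -> A -> Prop.
Hypotheses (Cbeta : is_congruence beta) (Cgamma : is_congruence gamma).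

Lemma rel_comp_m_fold t a b :
  rel_comp_m (4 * t).+1 beta gamma a b ->
  rel_comp_m (2 * t).+1 beta gamma a (ev3 p a a b).
Proof.
have even2t : odd (2 * t) = false by rewrite oddM.
have p_cong R : is_congruence R -> forall x x' y y',
    R x x' -> R y y' -> R (ev3 p a x y) (ev3 p a x' y').
  by move=> HR x x' y y'; exact: ev3_cong HR (cong_refl HR a).
rewrite (_ : (4 * t).+1 = 2 * t + (2 * t).+1); last by lia.
move=> Hab; have [c []] := rel_comp_m_split (m := 2 * t) (m' := (2 * t).+1) Hab.
rewrite even2t => Hac Hcb.
have [d [Bcd _]] := (rel_comp_mS _ _ _ _ _).1 Hcb.
have Hda : rel_comp_m (2 * t).+1 beta gamma d a.
  apply: rel_comp_m_sym; [by rewrite /= even2t | exact: cong_sym | exact: cong_sym |].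
  by rewrite -addn1; apply: rel_comp_m_cat Hac _; rewrite even2t.
have Bad : beta a (ev3 p a d c).
  by rewrite -{1}(p_xzz a d); apply: p_cong (cong_refl Cbeta d) (cong_sym Cbeta Bcd).
apply: rel_comp_m_absorbl (cong_trans Cbeta) Bad _.
exact: rel_comp_m_map2 (p_cong _ Cbeta) (p_cong _ Cgamma) Hda Hcb.
Qed.

End Folding.

Section GummChain.
Variables (S : signature) (A : algebra S) (n : nat) (j : nat -> term S var3).
Hypothesis j_xyx : forall i (x y : A), 1 <= i <= n.+1 -> ev3 (j i) x y x = x.
Hypothesis j_odd : forall i (x z : A), 1 <= i <= n -> odd i ->
  ev3 (j i) x z z = ev3 (j i.+1) x z z.
Hypothesis j_even : forall i (x z : A), 1 <= i <= n -> ~~ odd i ->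
  ev3 (j i) x x z = ev3 (j i.+1) x x z.
Hypothesis j_last : forall x y z : A, ev3 (j n.+1) x y z = z.
Variables alpha beta gamma : A -> A -> Prop.
Hypotheses (Calpha : is_congruence alpha) (Cbeta : is_congruence beta)
  (Cgamma : is_congruence gamma).
Variables (a b y y' : A) (m : nat).
Hypotheses (Aab : alpha a b) (Bay : beta a y) (Hyy' : rel_comp_m m gamma beta y y')
  (By'b : beta y' b) (odd_m : odd m).

Lemma j_meet_cong R i : is_congruence R -> 1 <= i <= n.+1 ->
  forall u u', R u u' -> rel_meet alpha R (ev3 (j i) a u b) (ev3 (j i) a u' b).
Proof.
move=> HR Hi u u' Ruu'; split; last exact: ev3_cong HR (cong_refl HR a) Ruu' (cong_refl HR b).
apply: (cong_trans Calpha (ev3_idem_cong Calpha (j_xyx a ^~ Hi) Aab u)).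
exact: (cong_sym Calpha (ev3_idem_cong Calpha (j_xyx a ^~ Hi) Aab u')).
Qed.

Lemma j_meet_succ i u z : 1 <= i <= n -> beta u z ->
  ev3 (j i) a z b = ev3 (j i.+1) a z b ->
  rel_meet alpha beta (ev3 (j i) a u b) (ev3 (j i.+1) a u b).
Proof.
move=> i_range Buz Ejz.
have [Hi Hi1] : 1 <= i <= n.+1 /\ 1 <= i.+1 <= n.+1 by lia.
split.
  apply: (cong_trans Calpha (ev3_idem_cong Calpha (j_xyx a ^~ Hi) Aab u)).
  exact: (cong_sym Calpha (ev3_idem_cong Calpha (j_xyx a ^~ Hi1) Aab u)).
apply: (cong_trans Cbeta (j_meet_cong Cbeta Hi Buz).2).
by rewrite Ejz; exact: (j_meet_cong Cbeta Hi1 (cong_sym Cbeta Buz)).2.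
Qed.

Let c i := ev3 (j i) a (if odd i then y else y') b.

Lemma j_block i : 1 <= i <= n ->
  rel_comp_m m.+1 (rel_meet alpha gamma) (rel_meet alpha beta) (c i) (c i.+1).
Proof.
move=> Hi; have Hi' : 1 <= i <= n.+1 by lia.
have map_j := rel_comp_m_map (j_meet_cong Cgamma Hi') (j_meet_cong Cbeta Hi').
rewrite /c oddS -addn1; case Hodd: (odd i) => /=.
  apply: rel_comp_m_cat (map_j _ _ _ Hyy') _; rewrite odd_m.
  exact: j_meet_succ Hi By'b (j_odd _ _ Hi Hodd).
have Hy'y := rel_comp_m_sym odd_m (cong_sym Cgamma) (cong_sym Cbeta) Hyy'.
apply: rel_comp_m_cat (map_j _ _ _ Hy'y) _; rewrite odd_m.
by apply: j_meet_succ Hi (cong_sym Cbeta Bay) (j_even _ _ Hi _); rewrite Hodd.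
Qed.

Lemma rel_comp_m_Gumm :
  rel_comp_m (m.+1 * n) (rel_meet alpha gamma) (rel_meet alpha beta)
    (ev3 (j 1) a y b) b.
Proof.
have blocks i : i < n -> rel_comp_m m.+1 (rel_meet alpha gamma)
    (rel_meet alpha beta) (c i.+1) (c i.+2) by move=> Hi; apply: j_block.
have := rel_comp_m_iter (c := fun i => c i.+1) _ blocks.
by rewrite /c /= j_last; apply; rewrite odd_m.
Qed.

End GummChain.

Lemma satisfies_incl_double (S : signature) (Sigma : identities S) n t k :
  0 < t -> has_Gumm_terms Sigma n -> satisfies_incl Sigma (2 * t).+1 k ->
  satisfies_incl Sigma (4 * t).+1 (k + 4 * t * n).
Proof.
move=> t_gt0 [p [j HG]] HI A HA alpha beta gamma Calpha Cbeta Cgamma a b [Aab Hab].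
have j_xyx i (x y : A) : 1 <= i <= n.+1 -> ev3 (j i) x y x = x := (HG A HA x y x).1 i.
have p_xzz (x z : A) : ev3 p x z z = x := (HG A HA x x z).2.1.
have p_xxz (x z : A) : ev3 p x x z = ev3 (j 1) x x z := (HG A HA x x z).2.2.1.
have j_odd i (x z : A) := (HG A HA x x z).2.2.2.1 i.
have j_even i (x z : A) := (HG A HA x x z).2.2.2.2.1 i.
have j_last (x y z : A) : ev3 (j n.+1) x y z = z := (HG A HA x y z).2.2.2.2.2.
have [m def4t odd_m] : exists2 m, 4 * t = m.+1 & odd m.
  by exists (4 * t.-1 + 3); [lia | rewrite oddD oddM].
have [e1 [Bae1 He1b]] := (rel_comp_mS _ _ _ _ _).1 Hab.
rewrite def4t -addn1 in He1b; have [e' [He1e']] := rel_comp_m_split He1b.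
rewrite odd_m => Be'b.
pose w := ev3 (j 1) a e1 b.
have Hw : rel_comp_m (2 * t).+1 beta gamma a w.
  apply: rel_comp_m_absorbr (cong_trans Cbeta) _ (rel_comp_m_fold p_xzz Cbeta Cgamma Hab) _.
    by rewrite oddS oddM.
  by rewrite p_xxz; apply: ev3_cong Cbeta (cong_refl Cbeta a) Bae1 (cong_refl Cbeta b).
have Aaw : alpha a w := cong_sym Calpha (ev3_idem_cong Calpha (j_xyx 1 a ^~ isT) Aab e1).
have [u [Hau Huw]] := HI A HA alpha beta gamma Calpha Cbeta Cgamma a w (conj Aaw Hw).
have [Cag Cab] := (is_congruence_meet Calpha Cgamma, is_congruence_meet Calpha Cbeta).
exists u; split => //; rewrite def4t.
apply: rel_comp_m_cat_trans (cong_refl Cag) (cong_refl Cab) (cong_trans Cag) Huw _.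
exact: (rel_comp_m_Gumm j_xyx j_odd j_even j_last Calpha Cbeta Cgamma Aab Bae1 He1e' Be'b
  odd_m).
Qed.

Theorem corollary4p6 (S : signature) (Sigma : identities S) (n r s : nat) :
  1 <= r -> 1 <= s ->
  has_Gumm_terms Sigma n ->
  satisfies_incl Sigma (2 * r).+1 s ->
  satisfies_incl Sigma (4 * r).+1 (s + 4 * r * n) /\
  (forall q : nat, 1 <= q ->
     satisfies_incl Sigma (2 ^ q * r).+1 (s + (2 ^ q.+1 - 4) * r * n)).
Proof.
move=> r_gt0 _ HG Hbase.
have doubled q : satisfies_incl Sigma (2 ^ q.+1 * r).+1 (s + (2 ^ q.+2 - 4) * r * n).
  elim: q => [|q IH]; first by rewrite expn1 /= !mul0n addn0.
  have pow_gt0 : 0 < 2 ^ q by rewrite expn_gt0.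
  have -> : (2 ^ q.+2 * r).+1 = (4 * (2 ^ q * r)).+1 by rewrite !expnS !mulnA.
  have -> : s + (2 ^ q.+3 - 4) * r * n = s + (2 ^ q.+2 - 4) * r * n + 4 * (2 ^ q * r) * n.
    by rewrite !expnS; move: (2 ^ q) pow_gt0 => x x_gt0; nia.
  apply: satisfies_incl_double HG _; first by rewrite muln_gt0 pow_gt0.
  by rewrite mulnA -expnS.
split; first exact: (doubled 1).
by case=> [//|q] _; exact: doubled.
Qed.
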